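(* Let $\xi_m>0$, $0\le\mu\le\xi_m$ and $T>0$, and let $$f(u)=2T\ln\frac{\cosh(\sqrt{\xi_m^2+u^2}/2T)}{\cosh(\sqrt{\mu^2+u^2}/2T)}+\mu\int_0^{\mu}\tanh\Big(\frac{\sqrt{\xi^2+u^2}}{2T}\Big)\frac{d\xi}{\sqrt{\xi^2+u^2}},\quad u>0.$$ Then $u\mapsto u f(u)$ is strictly increasing on $(0,\infty)$. *)

From Stdlib Require Import Reals Lra ClassicalEpsilon.
Open Scope R_scope.

(* Riemann integral of g over [a,b], as a total function: the Stdlib
   RiemannInt (which does not depend on the integrability proof, cf.
   RiemannInt_P5) when g is Riemann integrable, and 0 otherwise. *)
Definition RInt (g : R -> R) (a b : R) : R :=
  match excluded_middle_informative (inhabited (Riemann_integrable g a b)) with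
  | left H => RiemannInt (epsilon H (fun _ => True))
  | right _ => 0
  end.

Definition f_fun (xim mu T u : R) : R :=
  2 * T * ln (cosh (sqrt (xim ^ 2 + u ^ 2) / (2 * T))
              / cosh (sqrt (mu ^ 2 + u ^ 2) / (2 * T)))
  + mu * RInt (fun xi => tanh (sqrt (xi ^ 2 + u ^ 2) / (2 * T))
                          / sqrt (xi ^ 2 + u ^ 2)) 0 mu.

(** With [r = sqrt (x^2 + w^2)], the primitive [2T ln cosh (r/2T)] of
    [x tanh (r/2T) / r] turns [w f(w)] into
    [int_mu^xim x (w tanh(r/2T)/r) dx + mu int_0^mu w tanh(r/2T)/r dx].
    The integrand [w tanh(r/2T)/r = (w/r) tanh(r/2T)] is strictly increasing
    in [w > 0], because [w/r] is nondecreasing and [tanh(r/2T)] is positive and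
    strictly increasing.  Since [xim > 0], at least one of the two integrals
    ranges over a nondegenerate interval. *)

From Pilot Require Import Defs.
From Stdlib Require Import Reals Lra ClassicalEpsilon.
From Coquelicot Require Import Coquelicot.
Open Scope R_scope.

Lemma RInt_eq_Defs_RInt (g : R -> R) (a b : R) :
  ex_RInt g a b -> Defs.RInt g a b = RInt g a b.
Proof.
intro Hg; unfold Defs.RInt.
destruct excluded_middle_informative as [Hi | Hn].
- now rewrite (RInt_Reals g a b (epsilon Hi (fun _ => True))).
- exfalso; apply Hn; constructor; now apply ex_RInt_Reals_0.
Qed.

Lemma cosh_pos (y : R) : 0 < cosh y.
Proof. unfold cosh; pose proof (exp_pos y); pose proof (exp_pos (- y)); lra. Qed.

Lemma tanh_exp (y : R) : tanh y = 1 - 2 / (exp (2 * y) + 1).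
Proof.
unfold tanh, sinh, cosh.
rewrite exp_Ropp.
replace (2 * y) with (y + y) by ring; rewrite exp_plus.
pose proof (exp_pos y); field; nra.
Qed.

Lemma tanh_increasing (y z : R) : y < z -> tanh y < tanh z.
Proof.
intro Hyz; rewrite !tanh_exp.
assert (exp (2 * y) < exp (2 * z)) by (apply exp_increasing; lra).
pose proof (exp_pos (2 * y)).
enough (2 / (exp (2 * z) + 1) < 2 / (exp (2 * y) + 1)) by lra.
apply Rmult_lt_compat_l; [lra |]; apply Rinv_lt_contravar; nra.
Qed.

Lemma tanh_pos (y : R) : 0 < y -> 0 < tanh y.
Proof.
intro Hy; replace 0 with (tanh 0) by (unfold tanh, sinh; rewrite Ropp_0; lra).
now apply tanh_increasing.
Qed.

Lemma div_sqrt_add_sqr_le (x u v : R) :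
  0 < u -> u <= v -> u / sqrt (x ^ 2 + u ^ 2) <= v / sqrt (x ^ 2 + v ^ 2).
Proof.
intros Hu Huv.
assert (Ha : 0 < x ^ 2 + u ^ 2) by nra.
assert (Hb : 0 < x ^ 2 + v ^ 2) by nra.
pose proof (sqrt_lt_R0 _ Ha); pose proof (sqrt_lt_R0 _ Hb).
pose proof (sqrt_sqrt _ (Rlt_le _ _ Ha)); pose proof (sqrt_sqrt _ (Rlt_le _ _ Hb)).
set (a := sqrt (x ^ 2 + u ^ 2)) in *; set (b := sqrt (x ^ 2 + v ^ 2)) in *.
assert (Hcross : u * b <= v * a).
{ apply Rsqr_incr_0_var; [unfold Rsqr | nra].
  replace (u * b * (u * b)) with (u * u * (b * b)) by ring.
  replace (v * a * (v * a)) with (v * v * (a * a)) by ring.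
  assert (0 <= (v * v - u * u) * x ^ 2) by (apply Rmult_le_pos; nra).
  nra. }
replace (v / b) with (u / a + (v * a - u * b) / (a * b)) by (field; lra).
enough (0 <= (v * a - u * b) / (a * b)) by lra.
apply Rmult_le_pos; [lra |]; apply Rlt_le, Rinv_0_lt_compat; nra.
Qed.

Section TanhKernel.

Variable T : R.
Hypothesis T_pos : 0 < T.

Definition tanh_kernel (w x : R) : R :=
  tanh (sqrt (x ^ 2 + w ^ 2) / (2 * T)) / sqrt (x ^ 2 + w ^ 2).

Definition lncosh_primitive (w x : R) : R :=
  2 * T * ln (cosh (sqrt (x ^ 2 + w ^ 2) / (2 * T))).

Lemma f_fun_lncosh_primitive (xim mu w : R) :
  f_fun xim mu T w = lncosh_primitive w xim - lncosh_primitive w mu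
                     + mu * Defs.RInt (tanh_kernel w) 0 mu.
Proof.
unfold f_fun, lncosh_primitive; rewrite ln_div by apply cosh_pos.
fold (tanh_kernel w); ring.
Qed.

Lemma is_derive_lncosh_primitive (w x : R) : 0 < w ->
  is_derive (lncosh_primitive w) x (x * tanh_kernel w x).
Proof.
intro Hw; unfold lncosh_primitive, tanh_kernel, tanh, sinh, cosh.
assert (Hp : 0 < x * (x * 1) + w * (w * 1)) by nra.
auto_derive.
- repeat split; try exact Hp.
  pose proof (exp_pos (sqrt (x * (x * 1) + w * (w * 1)) * / (2 * T))).
  pose proof (exp_pos (- (sqrt (x * (x * 1) + w * (w * 1)) * / (2 * T)))).
  lra.
- replace (x ^ 2 + w ^ 2) with (x * (x * 1) + w * (w * 1)) by ring.
  pose proof (sqrt_lt_R0 _ Hp).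
  set (s := sqrt (x * (x * 1) + w * (w * 1))) in *.
  pose proof (exp_pos (s * / (2 * T))); pose proof (exp_pos (- (s * / (2 * T)))).
  unfold Rdiv; field; lra.
Qed.

Lemma continuous_tanh_kernel (w x : R) : 0 < w -> continuous (tanh_kernel w) x.
Proof.
intro Hw; apply (@ex_derive_continuous R_AbsRing R_NormedModule).
unfold tanh_kernel, tanh, sinh, cosh.
assert (Hp : 0 < x * (x * 1) + w * (w * 1)) by nra.
auto_derive.
pose proof (sqrt_lt_R0 _ Hp).
set (s := sqrt (x * (x * 1) + w * (w * 1))) in *.
pose proof (exp_pos (s * / (2 * T))); pose proof (exp_pos (- (s * / (2 * T)))).
repeat split; try lra; exact Hp.
Qed.

Lemma continuous_mul_tanh_kernel (g : R -> R) (w x : R) :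
  0 < w -> continuous g x -> continuous (fun x => g x * tanh_kernel w x) x.
Proof.
intros Hw Hg; apply (@continuous_mult R_UniformSpace R_AbsRing); [exact Hg |].
now apply continuous_tanh_kernel.
Qed.

Lemma ex_RInt_mul_tanh_kernel (g : R -> R) (w a b : R) :
  0 < w -> (forall x, continuous g x) ->
  ex_RInt (fun x => g x * tanh_kernel w x) a b.
Proof.
intros Hw Hg; apply (@ex_RInt_continuous R_CompleteNormedModule).
intros x _; now apply continuous_mul_tanh_kernel.
Qed.

Lemma ex_RInt_tanh_kernel (w a b : R) : 0 < w -> ex_RInt (tanh_kernel w) a b.
Proof.
intro Hw; apply (@ex_RInt_continuous R_CompleteNormedModule).
intros; now apply continuous_tanh_kernel.
Qed.

Lemma RInt_lncosh_primitive (w a b : R) : 0 < w ->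
  RInt (fun x => x * tanh_kernel w x) a b
  = lncosh_primitive w b - lncosh_primitive w a.
Proof.
intro Hw; apply is_RInt_unique, (is_RInt_derive (lncosh_primitive w)).
- intros x _; now apply is_derive_lncosh_primitive.
- intros x _; apply continuous_mul_tanh_kernel, continuous_id; exact Hw.
Qed.

Lemma scaled_tanh_kernel_lt (u v x : R) :
  0 < u -> u < v -> u * tanh_kernel u x < v * tanh_kernel v x.
Proof.
intros Hu Huv; unfold tanh_kernel.
assert (Ha : 0 < x ^ 2 + u ^ 2) by nra.
assert (Hb : 0 < x ^ 2 + v ^ 2) by nra.
pose proof (sqrt_lt_R0 _ Ha); pose proof (sqrt_lt_R0 _ Hb).
assert (Hab : sqrt (x ^ 2 + u ^ 2) < sqrt (x ^ 2 + v ^ 2)) by (apply sqrt_lt_1; nra).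
pose proof (div_sqrt_add_sqr_le x u v Hu (Rlt_le _ _ Huv)) as Hratio.
set (a := sqrt (x ^ 2 + u ^ 2)) in *; set (b := sqrt (x ^ 2 + v ^ 2)) in *.
assert (Hscale : a / (2 * T) < b / (2 * T))
  by (apply Rmult_lt_compat_r; [apply Rinv_0_lt_compat |]; lra).
pose proof (tanh_increasing _ _ Hscale).
assert (0 < tanh (a / (2 * T))) by (apply tanh_pos, Rdiv_lt_0_compat; lra).
assert (0 < u / a) by (apply Rdiv_lt_0_compat; lra).
replace (u * (tanh (a / (2 * T)) / a)) with (u / a * tanh (a / (2 * T))) by (field; lra).
replace (v * (tanh (b / (2 * T)) / b)) with (v / b * tanh (b / (2 * T))) by (field; lra).
nra.
Qed.

Lemma mul_f_fun_RInt (xim mu w : R) : 0 < w ->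
  w * f_fun xim mu T w
  = RInt (fun x => x * w * tanh_kernel w x) mu xim
    + mu * RInt (fun x => w * tanh_kernel w x) 0 mu.
Proof.
intro Hw.
rewrite f_fun_lncosh_primitive, RInt_eq_Defs_RInt by now apply ex_RInt_tanh_kernel.
rewrite (RInt_ext (fun x => x * w * tanh_kernel w x) (fun x => w * (x * tanh_kernel w x)))
  by (intros; simpl; ring).
rewrite (RInt_scal (fun x => x * tanh_kernel w x))
  by (apply ex_RInt_mul_tanh_kernel; [exact Hw | intro; apply continuous_id]).
rewrite (RInt_scal (tanh_kernel w)) by now apply ex_RInt_tanh_kernel.
rewrite RInt_lncosh_primitive by exact Hw.
unfold scal; simpl; unfold mult; simpl; ring.
Qed.

End TanhKernel.

Theorem mainTheorem5 (xim mu T : R) :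
  0 < xim -> 0 <= mu -> mu <= xim -> 0 < T ->
  forall u v : R, 0 < u -> u < v ->
    u * f_fun xim mu T u < v * f_fun xim mu T v.
Proof.
intros Hxi Hmu Hmx HT u v Hu Huv.
rewrite !mul_f_fun_RInt by lra.
assert (Hcont : forall (c : R -> R) w x, 0 < w -> (forall x, ex_derive c x) ->
          continuous (fun x => c x * tanh_kernel T w x) x)
  by (intros; apply continuous_mul_tanh_kernel; [assumption |];
      apply (@ex_derive_continuous R_AbsRing R_NormedModule); auto).
assert (Hscaled : forall x, u * tanh_kernel T u x < v * tanh_kernel T v x)
  by (intro; apply scaled_tanh_kernel_lt; lra).
destruct (Rle_lt_or_eq_dec mu xim Hmx) as [Hmux | <-].
- assert (RInt (fun x => x * u * tanh_kernel T u x) mu xim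
          < RInt (fun x => x * v * tanh_kernel T v x) mu xim).
  { apply RInt_lt; [exact Hmux | intros; apply Hcont; [lra | intro; auto_derive; trivial] .. |].
    intros x Hx; rewrite !Rmult_assoc; apply Rmult_lt_compat_l; [lra | apply Hscaled]. }
  enough (RInt (fun x => u * tanh_kernel T u x) 0 mu
          <= RInt (fun x => v * tanh_kernel T v x) 0 mu) by nra.
  apply RInt_le; [exact Hmu | apply ex_RInt_mul_tanh_kernel; [lra | intro; apply continuous_const] .. |].
  intros; apply Rlt_le, Hscaled.
- rewrite !RInt_point; unfold zero; simpl.
  enough (RInt (fun x => u * tanh_kernel T u x) 0 mu
          < RInt (fun x => v * tanh_kernel T v x) 0 mu) by nra.
  apply RInt_lt; [exact Hxi | intros; apply Hcont; [lra | intro; auto_derive; trivial] .. |].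
  intros; apply Hscaled.
Qed.
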